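(* Let $n$ and $\rho$ be positive integers with $\rho<n$, let $q$ be a prime power with $q\geq n-1$, and let ${\cal C}$ be a linear $[n,n-\rho,\rho+1]_q$ MDS code over $\mathbb{F}_q$. Define the code over graphs $$\mathcal{C}_{{\cal G}_1}=\Big\{G=(V_n,L)\ \Big|\ {\boldsymbol c}_{N_m^{\mathrm{in}}}\in{\cal C}\ \text{for all } m\in[n-\rho],\ \text{and}\ {\boldsymbol c}_{N_\ell^{\mathrm{out}}}\in{\cal C}\ \text{for all } \ell\in[n]\Big\}.$$ Then $\mathcal{C}_{{\cal G}_1}$ is a linear code over graphs over $\mathbb{F}_q$ of dimension $k_{\cal G}=(n-\rho)^2$ (i.e., it contains $q^{(n-\rho)^2}$ graphs), and it is a $\rho$-node-erasure-correcting code.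
   Context: For an integer $n>0$, $[n]=\{0,1,\ldots,n-1\}$. $V_n=\{v_0,\ldots,v_{n-1}\}$. A graph $G=(V_n,L)$ over $\mathbb{F}_q$ is a complete directed graph with self loops, i.e., edge set $V_n\times V_n$, together with a labeling $L:V_n\times V_n\to\mathbb{F}_q$. A code over graphs is a set of such graphs; it is linear if it is closed under $\mathbb{F}_q$-linear combinations of labelings, and its dimension is $\log_q$ of its size. For $i\in[n]$, $N_i^{\mathrm{out}}=\{(v_i,v_j)\mid j\in[n]\}$ and $N_i^{\mathrm{in}}=\{(v_j,v_i)\mid j\in[n]\}$. For a set of edges $U$, ${\boldsymbol c}_U\in\mathbb{F}_q^{|U|}$ is the vector of labels of the edges in $U$ listed in lexicographic order of the edges. A failure of node $i$ is the erasure of the labels of all edges in $N_i^{\mathrm{out}}\cup N_i^{\mathrm{in}}$ (the failed node indices are known). A code over graphs is $\rho$-node-erasure-correcting if for every graph in the code and every set of $\rho$ failed nodes, the erased labels are uniquely determined by the remaining labels (given the code). *)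

From HB Require Import structures.
From mathcomp Require Import all_boot all_order all_algebra finalg.
Set Implicit Arguments. Unset Strict Implicit. Unset Printing Implicit Defensive.
Import GRing.Theory.
Local Open Scope ring_scope.

Definition wt (F : finFieldType) (n : nat) (c : 'rV[F]_n) : nat :=
  #|[set j : 'I_n | c 0 j != 0]|.

Definition linear_code (F : finFieldType) (n : nat) (C : {set 'rV[F]_n}) : Prop :=
  0 \in C /\ forall (a : F) (x y : 'rV[F]_n), x \in C -> y \in C -> a *: x + y \in C.

Definition min_dist (F : finFieldType) (n : nat) (C : {set 'rV[F]_n}) (d : nat) : Prop :=
  (forall c, c \in C -> c != 0 -> (d <= wt c)%N) /\
  (exists2 c, c \in C & (c != 0) && (wt c == d)).

Definition lin_code_nkd (F : finFieldType) (n k d : nat) (C : {set 'rV[F]_n}) : Prop :=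
  [/\ linear_code C, #|C| = (#|F| ^ k)%N & min_dist C d].

(* A graph G = (V_n, L) over F is represented by its labeling matrix L,
   with L i j the label of the edge (v_i, v_j). *)
Definition graph_code_linear (F : finFieldType) (n : nat) (S : {set 'M[F]_n}) : Prop :=
  0 \in S /\ forall (a : F) (L1 L2 : 'M[F]_n), L1 \in S -> L2 \in S -> a *: L1 + L2 \in S.

Definition c_out (F : finFieldType) (n : nat) (L : 'M[F]_n) (i : 'I_n) : 'rV[F]_n := row i L.
Definition c_in (F : finFieldType) (n : nat) (L : 'M[F]_n) (i : 'I_n) : 'rV[F]_n := (col i L)^T.

Definition node_erasure_correcting (F : finFieldType) (n : nat) (S : {set 'M[F]_n})
  (rho : nat) : Prop :=
  forall (R : {set 'I_n}), #|R| = rho ->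
  forall L1 L2, L1 \in S -> L2 \in S ->
    (forall i j : 'I_n, i \notin R -> j \notin R -> L1 i j = L2 i j) -> L1 = L2.

Definition code_G1 (F : finFieldType) (n rho : nat) (C : {set 'rV[F]_n}) : {set 'M[F]_n} :=
  [set L : 'M[F]_n | [forall m : 'I_n, ((m < n - rho)%N ==> (c_in L m \in C))]
                     && [forall l : 'I_n, c_out L l \in C]].

From mathcomp Require Import all_boot all_order all_algebra finalg.
From mathcomp Require Import zify.
Import GRing.Theory.
Local Open Scope ring_scope.

(* Two codewords of an [n, n - rho, rho + 1] code that agree on n - rho
   coordinates differ in at most rho < rho + 1 places, hence are equal; by
   counting, every word on the first n - rho coordinates is then the
   restriction of exactly one codeword.  So a graph of the code is determined
   by its leading (n - rho) x (n - rho) block: the block fixes the first n - rho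
   columns, and these fix every row.  Conversely any block is realised by
   encoding its columns and then every row.  After rho nodes fail, every
   surviving row keeps n - rho known labels and is recovered; then each of the
   first n - rho columns has n - rho known labels, and these fix all rows. *)

Local Notation colsub g := (mxsub id g).

Lemma linear_code_eq_on (F : finFieldType) (n d : nat) (C : {set 'rV[F]_n}) (S : {set 'I_n}) :
  linear_code C -> min_dist C d -> (n < #|S| + d)%N ->
  {in C &, forall c1 c2 : 'rV[F]_n, {in S, forall j, c1 0 j = c2 0 j} -> c1 = c2}.
Proof.
move=> [_ C_lin] [C_wt _] ltn_Sd c1 c2 c1C c2C eq_S.
have diffC : c1 - c2 \in C by rewrite -scaleN1r addrC C_lin.
have supp_sub : [set j | (c1 - c2) 0 j != 0] \subset ~: S.
  by apply/subsetP => j; rewrite !inE !mxE; apply: contraNN => /eq_S ->; rewrite subrr.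
apply/eqP; rewrite -subr_eq0; apply: contraLR ltn_Sd => /(C_wt _ diffC) le_d_wt.
rewrite -leqNgt -[X in (_ <= X)%N]card_ord -(cardsC S) leq_add2l.
exact: leq_trans le_d_wt (subset_leq_card supp_sub).
Qed.

Section CodeG1.

Variables (F : finFieldType) (n rho : nat) (C : {set 'rV[F]_n}).

Definition lead : 'I_(n - rho) -> 'I_n := widen_ord (leq_subr rho n).

Lemma lead_inj : injective lead.
Proof. by move=> i j /(congr1 val) /= /ord_inj. Qed.

Lemma card_lead : #|[set lead i | i in 'I_(n - rho)]| = (n - rho)%N.
Proof. by rewrite card_imset ?card_ord //; apply: lead_inj. Qed.

Lemma code_G1P (L : 'M[F]_n) :
  reflect ((forall m, c_in L (lead m) \in C) /\ (forall l, c_out L l \in C))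
          (L \in code_G1 rho C).
Proof.
rewrite inE; apply: (iffP andP) => -[c_inC c_outC].
  split=> [m | l]; last exact: (forallP c_outC).
  exact: (implyP (forallP c_inC (lead m)) (ltn_ord m)).
split; apply/forallP; last exact: c_outC.
move=> m; apply/implyP => lt_m.
by have -> : m = lead (Ordinal lt_m) by apply: val_inj.
Qed.

Lemma code_G1_linear : linear_code C -> graph_code_linear (code_G1 rho C).
Proof.
move=> [C0 C_lin]; split.
  by apply/code_G1P; split=> i; rewrite /c_in /c_out ?linear0 ?trmx0 ?C0.
move=> a L1 L2 /code_G1P[in1 out1] /code_G1P[in2 out2].
apply/code_G1P; split=> i; rewrite /c_in /c_out !linearP /=; apply: C_lin;
  by [apply: in1 | apply: in2 | apply: out1 | apply: out2].
Qed.

Hypothesis C_mds : lin_code_nkd (n - rho) (rho + 1) C.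

Lemma mds_eq_on (S : {set 'I_n}) : (n - rho <= #|S|)%N ->
  {in C &, forall c1 c2 : 'rV[F]_n, {in S, forall j, c1 0 j = c2 0 j} -> c1 = c2}.
Proof. case: C_mds => C_lin _ C_dist le_S; apply: linear_code_eq_on C_lin C_dist _; lia. Qed.

Lemma mds_eq_lead : {in C &, injective (colsub lead)}.
Proof.
move=> c1 c2 c1C c2C /matrixP eq_lead.
apply: (mds_eq_on [set lead i | i in 'I_(n - rho)]) => //; first by rewrite card_lead.
by move=> _ /imsetP[i _ ->]; have := eq_lead 0 i; rewrite !mxE.
Qed.

Lemma mds_lead_onto (v : 'rV[F]_(n - rho)) : exists2 c, c \in C & colsub lead c = v.
Proof.
have : v \in colsub lead @: C.
  have [_ cardC _] := C_mds.
  suff -> : colsub lead @: C = setT by rewrite inE.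
  apply/eqP; rewrite eqEcard subsetT cardsT card_in_imset; last exact: mds_eq_lead.
  by rewrite /= card_mx mul1n cardC.
by case/imsetP => c cC ->; exists c.
Qed.

Definition mds_encode (v : 'rV[F]_(n - rho)) : 'rV[F]_n :=
  odflt 0 [pick c in C | colsub lead c == v].

Lemma mds_encodeP v : mds_encode v \in C /\ colsub lead (mds_encode v) = v.
Proof.
rewrite /mds_encode; case: pickP => [c /andP[cC /eqP]// | none].
by have [c cC lead_c] := mds_lead_onto v; have := none c; rewrite cC lead_c eqxx.
Qed.

Lemma mds_encode_lead v (j : 'I_(n - rho)) : mds_encode v 0 (lead j) = v 0 j.
Proof. by have [_ /matrixP/(_ 0 j)] := mds_encodeP v; rewrite mxE. Qed.

Lemma code_G1_eq_lead_cols L1 L2 : L1 \in code_G1 rho C -> L2 \in code_G1 rho C ->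
  (forall m, c_in L1 (lead m) = c_in L2 (lead m)) -> L1 = L2.
Proof.
move=> /code_G1P[_ out1] /code_G1P[_ out2] eq_cols; apply/matrixP => i j.
have /rowP/(_ j) : c_out L1 i = c_out L2 i.
  apply: mds_eq_lead; rewrite ?out1 ?out2 //.
  by apply/rowP => m; have /rowP/(_ i) := eq_cols m; rewrite !mxE.
by rewrite !mxE.
Qed.

Lemma code_G1_block_inj : {in code_G1 rho C &, injective (mxsub lead lead)}.
Proof.
move=> L1 L2 L1C L2C /matrixP eq_block; apply: code_G1_eq_lead_cols => // m.
have [/code_G1P[in1 _] /code_G1P[in2 _]] := (L1C, L2C).
apply: mds_eq_lead; rewrite ?in1 ?in2 //.
by apply/rowP => i; have := eq_block i m; rewrite !mxE.
Qed.

Definition encode_cols (A : 'M[F]_(n - rho)) : 'M[F]_(n, n - rho) :=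
  \matrix_(i, m) mds_encode (col m A)^T 0 i.

Definition encode_graph (A : 'M[F]_(n - rho)) : 'M[F]_n :=
  \matrix_i mds_encode (row i (encode_cols A)).

Lemma encode_graphP A : encode_graph A \in code_G1 rho C.
Proof.
apply/code_G1P; split=> [m | l].
  have -> : c_in (encode_graph A) (lead m) = mds_encode (col m A)^T.
    by apply/rowP => i; rewrite !mxE mds_encode_lead !mxE.
  exact: (mds_encodeP _).1.
by rewrite /c_out rowK; exact: (mds_encodeP _).1.
Qed.

Lemma block_encode_graph A : mxsub lead lead (encode_graph A) = A.
Proof.
by apply/matrixP => i j; rewrite !mxE mds_encode_lead !mxE mds_encode_lead !mxE.
Qed.

Lemma card_code_G1 : #|code_G1 rho C| = (#|F| ^ ((n - rho) ^ 2))%N.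
Proof.
rewrite -(card_in_imset code_G1_block_inj).
have -> : mxsub lead lead @: code_G1 rho C = setT.
  apply/eqP; rewrite eqEsubset subsetT; apply/subsetP => A _.
  by apply/imsetP; exists (encode_graph A); rewrite ?encode_graphP ?block_encode_graph.
by rewrite cardsT card_mx mulnn.
Qed.

Lemma code_G1_node_erasure : node_erasure_correcting (code_G1 rho C) rho.
Proof.
move=> R cardR L1 L2 L1C L2C eq_off_R.
have le_notR : (n - rho <= #|~: R|)%N by have := cardsC R; rewrite card_ord cardR; lia.
have [/code_G1P[in1 out1] /code_G1P[in2 out2]] := (L1C, L2C).
have eq_rows i : i \notin R -> c_out L1 i = c_out L2 i.
  move=> iR; apply: (mds_eq_on _ le_notR); rewrite ?out1 ?out2 // => j; rewrite inE => jR.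
  by rewrite !mxE eq_off_R.
apply: code_G1_eq_lead_cols => // m.
apply: (mds_eq_on _ le_notR); rewrite ?in1 ?in2 // => i; rewrite inE => iR.
by have /rowP/(_ (lead m)) := eq_rows i iR; rewrite !mxE.
Qed.

End CodeG1.

Theorem theorem1 (F : finFieldType) (n rho : nat) (C : {set 'rV[F]_n}) :
  (0 < rho)%N -> (rho < n)%N -> (n - 1 <= #|F|)%N ->
  lin_code_nkd (n - rho) (rho + 1) C ->
  [/\ graph_code_linear (code_G1 rho C),
      #|code_G1 rho C| = (#|F| ^ ((n - rho) ^ 2))%N
    & node_erasure_correcting (code_G1 rho C) rho].
Proof.
(* The bounds on rho and #|F| only serve to make an MDS code C exist. *)
move=> _ _ _ C_mds; have [C_lin _ _] := C_mds.
split; [exact: code_G1_linear | exact: card_code_G1 | exact: code_G1_node_erasure].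
Qed.
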